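(* Let $m\ge 2$ and $\alpha\in[0,1]$. Every deterministic voting rule $f$ that takes ranked preferences with intensities as input satisfies, under mandatory elicitation of the intensities, $\mathsf{dist}_\alpha(f)\ge 1+2\alpha$.
   Context: An election $\mathcal E=(N,A,\vec\sigma)$ has a finite set $N$ of $n$ agents, a set $A$ of $m$ alternatives, and a profile $\vec\sigma=(\sigma_1,\dots,\sigma_n)$. Each $\sigma_i=(\pi_i,\Join_i)$ consists of a bijection $\pi_i:[m]\to A$, where $\pi_i(1)$ is agent $i$'s most preferred alternative, and a map $\Join_i:[m-1]\to\{\succ,\succ\!\!\succ\}$ recording strong ($\succ\!\!\succ$) or ordinary ($\succ$) preference between consecutive alternatives. A metric $d$ on $N\cup A$ is nonnegative and symmetric, satisfies the triangle inequality, and has $d(x,x)=0$. For $\alpha\in[0,1]$, the profile $\vec\sigma$ is $\alpha$-consistent with $d$ under mandatory elicitation if for every agent $i$ and every $j\in[m-1]$: - if $\Join_i(j)=\,\succ$, then $d(i,\pi_i(j+1))\ge d(i,\pi_i(j))>\alpha\, d(i,\pi_i(j+1))$; - if $\Join_i(j)=\,\succ\!\!\succ$, then $d(i,\pi_i(j))\le \alpha\, d(i,\pi_i(j+1))$. Let $\mathrm{sc}_d(a)=\sum_{i\in N}d(i,a)$. Define $\mathsf{dist}_\alpha(a,\mathcal E)=\sup_d \mathrm{sc}_d(a)/\min_{b\in A}\mathrm{sc}_d(b)$ over such $\alpha$-consistent metrics $d$. For a deterministic voting rule $f$, $\mathsf{dist}_\alpha(f)=\sup_{\mathcal E}\mathsf{dist}_\alpha(f(\vec\sigma),\mathcal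 E)$ over all elections with $m$ alternatives. *)

From mathcomp Require Import all_boot all_order all_algebra all_fingroup.
From mathcomp Require Import all_classical all_reals.
From mathcomp Require Import ereal.
Set Implicit Arguments. Unset Strict Implicit. Unset Printing Implicit Defensive.
Import Order.TTheory GRing.Theory Num.Theory.
Local Open Scope ring_scope.
Local Open Scope classical_set_scope.

(* sigma_i = (pi_i, Join_i): pi_i maps rank j (0-indexed) to an alternative;
   strong j = true means  pi_i(j) >>- pi_i(j+1) (strong preference),
   strong j = false means pi_i(j) >- pi_i(j+1). *)
Record pref (m : nat) := Pref {
  ranking : {perm 'I_m};
  strong  : {ffun 'I_m.-1 -> bool} }.

Definition profile (n m : nat) := 'I_n -> pref m.

Definition voting_rule (m : nat) := forall n : nat, profile n m -> 'I_m.

Definition point (n m : nat) := ('I_n + 'I_m)%type.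

Definition is_metric (R : realType) (T : Type) (d : T -> T -> R) : Prop :=
  [/\ (forall x y, 0 <= d x y),
      (forall x y, d x y = d y x),
      (forall x y z, d x z <= d x y + d y z) &
      (forall x, d x x = 0)].

Definition consistent (R : realType) (n m : nat) (alpha : R)
    (sigma : profile n m) (d : point n m -> point n m -> R) : Prop :=
  forall (i : 'I_n) (j : 'I_m.-1) (a b : 'I_m),
    val a = val j -> val b = (val j).+1 ->
    let x := ranking (sigma i) a in
    let y := ranking (sigma i) b in
    if strong (sigma i) j
    then d (inl i) (inr x) <= alpha * d (inl i) (inr y)
    else (d (inl i) (inr x) <= d (inl i) (inr y)) &&
         (alpha * d (inl i) (inr y) < d (inl i) (inr x)).

Definition social_cost (R : realType) (n m : nat)
    (d : point n m -> point n m -> R) (a : 'I_m) : R :=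
  \sum_(i < n) d (inl i) (inr a).

(* sc_d(a) / min_b sc_d(b), with the conventions x/0 = +oo for x > 0 and
   0/0 = 1 (a is then optimal) *)
Definition cost_ratio (R : realType) (n m : nat)
    (d : point n m -> point n m -> R) (a : 'I_m) : \bar R :=
  let M := \big[Num.min/social_cost d a]_(b < m) social_cost d b in
  if M == 0 then (if social_cost d a == 0 then 1%E else +oo%E)
  else (social_cost d a / M)%:E.

Definition dist_elec (R : realType) (n m : nat) (alpha : R)
    (sigma : profile n m) (a : 'I_m) : \bar R :=
  ereal_sup [set cost_ratio d a |
              d in [set d : point n m -> point n m -> R |
                      is_metric d /\ consistent alpha sigma d]].

Definition dist_rule (R : realType) (m : nat) (alpha : R)
    (f : voting_rule m) : \bar R :=
  ereal_sup [set x | exists (n : nat) (sigma : profile n m),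
                       x = dist_elec alpha sigma (f n sigma)].

From Pilot Require Import Defs.
From mathcomp Require Import all_boot all_order all_algebra all_fingroup.
From mathcomp Require Import all_classical all_reals.
From mathcomp Require Import ereal.
From mathcomp Require Import lra.
Import Order.TTheory GRing.Theory Num.Theory.
Local Open Scope ring_scope.
Set Implicit Arguments. Unset Strict Implicit. Unset Printing Implicit Defensive.

(** Two agents report a0 >> a1 > a2 > ... and a1 >> a0 > a2 > ...
  (all preferences strong when alpha = 1).  Whatever the rule elects, one of
  the two tops, say b, is not the winner; let a be the other top.  Put the
  agent whose top is b on b itself, and the other agent at the centre of a
  star with arms of length alpha to a and 1 to every other alternative.
  This metric is alpha-consistent with the profile, b has social cost 1,
  a has 1 + 2 alpha and every other alternative 3. *)

Section Metrics.
Variable R : realType.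

Definition star_dist (T : eqType) (w : T -> R) (x y : T) : R :=
  if x == y then 0 else w x + w y.

Lemma star_dist_metric (T : eqType) (w : T -> R) :
  (forall x, 0 <= w x) -> is_metric (star_dist w).
Proof.
move=> w_ge0; rewrite /star_dist; split.
- by move=> x y; case: eqP => _ //; rewrite addr_ge0.
- by move=> x y; rewrite eq_sym addrC.
- move=> x y z; have := w_ge0 x; have := w_ge0 y; have := w_ge0 z.
  case: (x =P z) => [-> | /eqP xz]; first by rewrite [y == z]eq_sym; case: eqP; lra.
  case: (x =P y) => [<- | _]; first by rewrite (negbTE xz); lra.
  by case: (y =P z) => [-> | _]; rewrite ?eqxx; lra.
- by move=> x; rewrite eqxx.
Qed.

Lemma is_metric_comp (T U : Type) (d : U -> U -> R) (g : T -> U) :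
  is_metric d -> is_metric (fun x y => d (g x) (g y)).
Proof. by case=> d_ge0 d_sym d_tri d_refl; split=> *. Qed.

Lemma social_cost_ge0 (n m : nat) (d : Defs.point n m -> Defs.point n m -> R)
    (a : 'I_m) :
  is_metric d -> 0 <= social_cost d a.
Proof. by case=> d_ge0 _ _ _; apply: sumr_ge0 => i _. Qed.

Lemma cost_ratio_ge (n m : nat) (d : Defs.point n m -> Defs.point n m -> R)
    (a b : 'I_m) (c : R) :
  is_metric d -> 0 < c -> 0 < social_cost d b ->
  c * social_cost d b <= social_cost d a -> (c%:E <= cost_ratio d a)%E.
Proof.
move=> d_metric c_gt0 b_gt0 le_ab; rewrite /cost_ratio.
set M := \big[_/_]_(_ < m) _.
have M_le : M <= social_cost d b by apply: bigmin_le.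
have M_ge0 : 0 <= M by apply: le_bigmin => *; apply: social_cost_ge0.
have a_gt0 : 0 < social_cost d a by apply: lt_le_trans le_ab; rewrite mulr_gt0.
case: eqP => [_ | /eqP M_neq0]; first by rewrite gt_eqF ?leey.
have M_gt0 : 0 < M by rewrite lt_def M_neq0.
rewrite lee_fin ler_pdivlMr //; apply: le_trans le_ab.
by rewrite ler_wpM2l // ltW.
Qed.

Lemma cost_ratio_le_dist_rule (m : nat) (alpha : R) (f : voting_rule m) (n : nat)
    (sigma : profile n m) (d : Defs.point n m -> Defs.point n m -> R) :
  is_metric d -> consistent alpha sigma d ->
  (cost_ratio d (f n sigma) <= dist_rule alpha f)%E.
Proof.
move=> d_metric d_cons.
apply: le_trans (_ : dist_elec alpha sigma (f n sigma) <= _)%E.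
  by apply: ereal_sup_ubound; exists d.
by apply: ereal_sup_ubound; exists n, sigma.
Qed.

End Metrics.

Lemma ord2_neq (i j k : 'I_2) : i != j -> (k != i) = (k == j).
Proof. by move: i j k => [[|[|?]] ?] [[|[|?]] ?] [[|[|?]] ?]. Qed.

Lemma sum_ord2 (V : nmodType) (F : 'I_2 -> V) (i j : 'I_2) :
  i != j -> \sum_k F k = F i + F j.
Proof.
move=> neq_ij; rewrite (bigD1 i) //=; congr (_ + _).
by apply: big_pred1 => k; apply: ord2_neq.
Qed.

Section Threshold_flags.
Variables (R : realType) (alpha : R).

(* For alpha = 1 an ordinary preference d x <= d y < d x is never consistent,
   so every preference is reported as strong. *)
Definition threshold_flags (k : nat) : {ffun 'I_k -> bool} :=
  [ffun j => (val j == 0)%N || (alpha == 1)].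

Definition rank_consistent (D : nat -> R) : Prop :=
  forall k : nat, if (k == 0)%N || (alpha == 1) then D k <= alpha * D k.+1
                  else (D k <= D k.+1) && (alpha * D k.+1 < D k).

Lemma consistent_of_rank_consistent (n m : nat) (sigma : profile n m)
    (d : Defs.point n m -> Defs.point n m -> R) :
  (forall i, strong (sigma i) = threshold_flags m.-1) ->
  (forall i, exists2 D, rank_consistent D &
     forall a, d (inl i) (inr (ranking (sigma i) a)) = D (val a)) ->
  consistent alpha sigma d.
Proof.
move=> flagsE rankE i j a b aE bE /=; have [D D_cons dE] := rankE i.
by rewrite flagsE ffunE !dE aE bE; apply: D_cons.
Qed.

Lemma rank_consistent_hub :
  alpha <= 1 -> rank_consistent (fun k => if (k == 0)%N then alpha else 1).
Proof.
move=> alpha_le1 k; case: (alpha =P 1) => [-> | /eqP alpha_neq1].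
  by case: k => [|k] /=; lra.
have alpha_lt1 : alpha < 1 by rewrite lt_neqAle alpha_neq1.
by case: k => [|k] /=; rewrite ?orbF; [lra | apply/andP; split; lra].
Qed.

Lemma rank_consistent_on_top : 0 <= alpha <= 1 ->
  rank_consistent (fun k => if (k == 0)%N then 0 else if (k == 1)%N then 1 + alpha else 2).
Proof.
move=> /andP[alpha_ge0 alpha_le1] k; case: (alpha =P 1) => [-> | /eqP alpha_neq1].
  by case: k => [|[|k]] /=; lra.
have alpha_lt1 : alpha < 1 by rewrite lt_neqAle alpha_neq1.
by case: k => [|[|k]] /=; rewrite ?orbF; [nra | apply/andP; split; lra ..].
Qed.

End Threshold_flags.

Section Star_witness.
Variables (R : realType) (alpha : R) (m : nat).
Variable sigma : profile 2 m.+2.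
Hypothesis strong_sigma : forall i, strong (sigma i) = threshold_flags alpha m.+1.
Variables peer hub : 'I_2.
Hypothesis peer_neq_hub : peer != hub.
Hypothesis peer_second : ranking (sigma peer) (inord 1) = ranking (sigma hub) ord0.

Local Notation a := (ranking (sigma hub) ord0).
Local Notation b := (ranking (sigma peer) ord0).

Definition star_location (p : Defs.point 2 m.+2) : option 'I_m.+2 :=
  match p with
  | inl i => if i == peer then Some b else None
  | inr x => Some x
  end.

Definition star_weight (l : option 'I_m.+2) : R :=
  if l is Some x then (if x == a then alpha else 1) else 0.

Definition star_witness (p q : Defs.point 2 m.+2) : R :=
  star_dist star_weight (star_location p) (star_location q).

Lemma star_witness_metric : 0 <= alpha -> is_metric star_witness.
Proof.
move=> alpha_ge0; apply: is_metric_comp; apply: star_dist_metric => -[x|] //=.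
by case: ifP => _ //; apply: ler01.
Qed.

Lemma top_peer_neq_top_hub : b != a.
Proof. by rewrite -peer_second (inj_eq perm_inj) -val_eqE /= inordK. Qed.

Lemma star_witness_hub x :
  star_witness (inl hub) (inr x) = if x == a then alpha else 1.
Proof.
by rewrite /star_witness /star_dist /= [hub == peer]eq_sym (negbTE peer_neq_hub) add0r.
Qed.

Lemma star_witness_peer x :
  star_witness (inl peer) (inr x) =
    if x == b then 0 else if x == a then 1 + alpha else 2.
Proof.
rewrite /star_witness /star_dist /= eqxx /= (negbTE top_peer_neq_top_hub).
rewrite (inj_eq (@Some_inj _)) eq_sym.
by case: eqP => // _; case: eqP.
Qed.

Lemma star_witness_consistent : 0 <= alpha <= 1 -> consistent alpha sigma star_witness.
Proof.
move=> alpha01.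
have rankE j k l : (ranking (sigma j) k == ranking (sigma j) l) = (k == l :> nat).
  by rewrite (inj_eq perm_inj).
apply: consistent_of_rank_consistent => // i.
case: (i =P peer) => [-> | /eqP i_neq_peer].
  exists (fun k => if (k == 0)%N then 0 else if (k == 1)%N then 1 + alpha else 2).
    exact: rank_consistent_on_top.
  by move=> x; rewrite star_witness_peer -peer_second !rankE inordK.
have -> : i = hub by apply/eqP; rewrite -(ord2_neq _ peer_neq_hub).
exists (fun k => if (k == 0)%N then alpha else 1).
  by apply: rank_consistent_hub; case/andP: alpha01.
by move=> x; rewrite star_witness_hub rankE.
Qed.

Lemma social_cost_star_witness x :
  social_cost star_witness x =
    star_witness (inl peer) (inr x) + star_witness (inl hub) (inr x).
Proof. exact: sum_ord2. Qed.

Lemma social_cost_star_top : social_cost star_witness b = 1.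
Proof.
by rewrite social_cost_star_witness star_witness_peer star_witness_hub eqxx
  (negbTE top_peer_neq_top_hub) add0r.
Qed.

Lemma social_cost_star_ge x :
  alpha <= 1 -> x != b -> 1 + 2 * alpha <= social_cost star_witness x.
Proof.
move=> alpha_le1 /negbTE x_neq_b.
rewrite social_cost_star_witness star_witness_peer star_witness_hub {}x_neq_b.
by case: eqP => _; lra.
Qed.

End Star_witness.

Definition swap_profile (R : realType) (alpha : R) (m : nat) : profile 2 m.+2 :=
  fun i => Pref (tperm ord0 (inord i)) (threshold_flags alpha m.+1).

Lemma swap_profile_top (R : realType) (alpha : R) (m : nat) (i : 'I_2) :
  ranking (swap_profile alpha m i) ord0 = inord i.
Proof. exact: tpermL. Qed.

Lemma swap_profile_second (R : realType) (alpha : R) (m : nat) (i j : 'I_2) :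
  i != j ->
  ranking (swap_profile alpha m i) (inord 1) = ranking (swap_profile alpha m j) ord0.
Proof.
have inord0 : inord 0 = ord0 :> 'I_m.+2 by apply: val_inj; rewrite /= inordK.
rewrite swap_profile_top /=.
case: i j => [[|[|?]] ?] [[|[|?]] ?] //= _; first by rewrite inord0 tperm1 perm1.
by rewrite tpermR inord0.
Qed.

Theorem lemma2 (R : realType) (m : nat) (alpha : R) :
  (2 <= m)%N -> 0 <= alpha <= 1 ->
  forall f : voting_rule m,
    ((1 + 2 * alpha)%:E <= dist_rule alpha f)%E.
Proof.
case: m => [|[|m]] // _ alpha01 f; have /andP[alpha_ge0 alpha_le1] := alpha01.
set sigma := swap_profile alpha m; set w := f 2%N sigma.
have [peer [hub [peer_neq_hub top_neq_w]]] :
    exists peer hub : 'I_2, peer != hub /\ ranking (sigma peer) ord0 != w.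
  rewrite /sigma; case: (w =P inord 1) => [-> | /eqP w_neq1].
    exists ord0, ord_max; split => //.
    by rewrite swap_profile_top -(inj_eq (@ord_inj _)) !inordK.
  by exists ord_max, ord0; split => //; rewrite swap_profile_top eq_sym.
have peer_second := swap_profile_second alpha m peer_neq_hub.
pose d := star_witness alpha sigma peer hub.
have d_metric : is_metric d by exact: star_witness_metric.
have d_cons : consistent alpha sigma d by apply: star_witness_consistent.
apply: le_trans (cost_ratio_le_dist_rule f d_metric d_cons).
apply: (cost_ratio_ge (b := ranking (sigma peer) ord0) d_metric).
- lra.
- by rewrite /d (social_cost_star_top alpha peer_neq_hub peer_second) ltr01.
- rewrite /d (social_cost_star_top alpha peer_neq_hub peer_second) mulr1.
  by apply: social_cost_star_ge; rewrite // eq_sym.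
Qed.
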